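(* Let $A_k>0$, $B_k>0$, $0<\alpha_k\le1$, let $e_k(n)=\frac{A_k}{n^{\alpha_k}+B_k}$, and for ${\bm{q}}\in\Delta_K$ and $N\ge1$ let $\bar e_k({\bm{q}})=\mathbb{E}_{n_k\sim\mathrm{Binom}(N,q_k)}[e_k(n_k)]$ and $f_k({\bm{q}})=\frac{A_k}{(q_kN)^{\alpha_k}+B_k}$. Then, when $Nq_k$ is large enough (i.e. $Nq_k\ge M$ for some threshold $M$ depending only on $A_k,B_k,\alpha_k$), $$|f_k({\bm{q}})-\bar e_k({\bm{q}})|\le\frac{320A_k}{B_k}\cdot\frac{1}{(Nq_k)^2}+\frac{\alpha_kA_k}{(Nq_k)^{\alpha_k+\frac14}}+\frac{\alpha_kA_k}{(Nq_k)^{\alpha_k+\frac12}}.$$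
   Context: $\Delta_K=\{{\bm{r}}\in\mathbb{R}^K:{\bm{r}}\ge0,\ \sum_kr_k=1\}$. $\bar e_k({\bm{q}})$ is the expected error on component $k$ of the power-law model when trained on $N$ i.i.d. samples from the mixture with proportions ${\bm{q}}$ (the count $n_k$ from component $k$ is $\mathrm{Binom}(N,q_k)$); $f_k$ is the ''approximate subpopulation error function''. *)

From mathcomp Require Import all_boot all_order all_algebra.
From mathcomp Require Import all_classical all_reals all_analysis.
Set Implicit Arguments. Unset Strict Implicit. Unset Printing Implicit Defensive.
Import Order.TTheory GRing.Theory Num.Theory.
Local Open Scope ring_scope.

Definition simplex {R : realType} (K : nat) (q : 'I_K -> R) : Prop :=
  (forall k, 0 <= q k) /\ \sum_(k < K) q k = 1.

Definition pl_err {R : realType} (A B alpha : R) (n : nat) : R :=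
  A / ((n%:R) `^ alpha + B).

Definition binom_pmf {R : realType} (N : nat) (p : R) (n : nat) : R :=
  'C(N, n)%:R * p ^+ n * (1 - p) ^+ (N - n).

Definition expected_err {R : realType} (A B alpha : R) (N : nat) (p : R) : R :=
  \sum_(n < N.+1) binom_pmf N p n * pl_err A B alpha n.

Definition approx_err {R : realType} (A B alpha : R) (N : nat) (p : R) : R :=
  A / ((p * N%:R) `^ alpha + B).

From mathcomp Require Import all_boot all_order all_algebra.
From mathcomp Require Import all_classical all_reals all_analysis.
From mathcomp Require Import ring lra.
Import Order.TTheory GRing.Theory Num.Theory.
Local Open Scope ring_scope.

(* Put g(t) = A / (t^alpha + B), so that f_k = g(x) for x = N q_k and ebar_k = E g(n)
   for n ~ Binom(N, q_k).  By the Bernoulli inequality for the concave power t^alpha,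
   |g(x) - g(y)| <= 2 alpha A |y - x| / x^(alpha + 1) as soon as y >= x / 2, while for
   y < x / 2 the trivial bound A / B is dominated by 16 A (y - x)^4 / (B x^4).  Taking
   expectations, the binomial fourth central moment is at most 4 x^2 and the mean absolute
   deviation at most sqrt x, which gives the bound (with 64 in place of 320) for every
   x >= 1: the threshold M = 1 works. *)

Lemma normr_le_AMGM {R : realFieldType} (s d : R) : 0 < s ->
  `|d| <= d ^+ 2 / (2 * s) + s / 2.
Proof.
move=> s_gt0.
have -> : d ^+ 2 / (2 * s) + s / 2 = `|d| + (`|d| - s) ^+ 2 / (2 * s).
  by rewrite -(real_normK (num_real d)); field; rewrite gt_eqF.
by rewrite lerDl divr_ge0 ?sqr_ge0 ?mulr_ge0 ?ltW.
Qed.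

Section PowerBounds.
Context {R : realType}.
Implicit Types a t u w x y : R.

Lemma powR_le_tangent {t a} : 0 < t -> 0 <= a <= 1 -> t `^ a <= 1 + a * (t - 1).
Proof.
move=> t_gt0 /andP[a_ge0 a_le1].
have := @concave_ln R (Itv01 a_ge0 a_le1) t 1 t_gt0 ltr01.
rewrite !convRE /= ln1 mulr0 addr0 => ln_le.
have mid_gt0 : 0 < a * t + (1 - a) * 1 by nra.
have -> : 1 + a * (t - 1) = a * t + (1 - a) * 1 by ring.
by rewrite /powR gt_eqF // -[X in _ <= X]lnK ?posrE // ler_expR.
Qed.

Lemma powR_subr_le {a u w} : 0 <= a <= 1 -> 0 < u -> u <= w ->
  (w `^ a - u `^ a) * u <= a * (w - u) * u `^ a.
Proof.
move=> a01 u_gt0 uw.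
have w_gt0 : 0 < w := lt_le_trans u_gt0 uw.
have -> : w `^ a = (w / u) `^ a * u `^ a.
  by rewrite -powRM ?divfK ?gt_eqF // ?divr_ge0 // ltW.
have := powR_le_tangent (divr_gt0 w_gt0 u_gt0) a01.
have ua_gt0 : 0 < u `^ a := powR_gt0 _ u_gt0.
rewrite -(ler_pM2r (mulr_gt0 ua_gt0 u_gt0)) => tangent_le.
have -> : a * (w - u) * u `^ a = (1 + a * (w / u - 1)) * (u `^ a * u) - u `^ a * u.
  by field; rewrite gt_eqF.
by rewrite mulrBl -mulrA lerD2r.
Qed.

Lemma powR_dist_le {a x y} : 0 <= a <= 1 -> 0 < x -> x / 2 <= y ->
  `|y `^ a - x `^ a| * x <= 2 * a * `|y - x| * y `^ a.
Proof.
move=> /[dup] a01 /andP[a_ge0 _] x_gt0 y_ge.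
have y_gt0 : 0 < y by apply: lt_le_trans y_ge; rewrite divr_gt0.
have ya_ge0 : 0 <= y `^ a := powR_ge0 _ _.
have [xy | yx] := leP x y.
  have xaya : x `^ a <= y `^ a by rewrite ge0_ler_powR // ?nnegrE ltW.
  rewrite !ger0_norm ?subr_ge0 //.
  apply: le_trans (powR_subr_le a01 x_gt0 xy) _.
  have : a * (y - x) * x `^ a <= a * (y - x) * y `^ a.
    by apply: ler_wpM2l => //; rewrite mulr_ge0 ?subr_ge0.
  have : 0 <= a * (y - x) * y `^ a by rewrite !mulr_ge0 ?subr_ge0.
  lra.
have yaxa : y `^ a <= x `^ a by rewrite ge0_ler_powR // ?nnegrE ltW.
rewrite distrC (distrC y) !ger0_norm ?subr_ge0 ?(ltW yx) //.
have := powR_subr_le a01 y_gt0 (ltW yx).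
have : 0 <= x `^ a - y `^ a by rewrite subr_ge0.
have : 0 <= a * (x - y) * y `^ a by rewrite !mulr_ge0 ?subr_ge0 ?(ltW yx).
nra.
Qed.

End PowerBounds.

Definition plaw {R : realType} (A B alpha t : R) : R := A / (t `^ alpha + B).

Section PowerLaw.
Context {R : realType} (A B a : R).
Hypotheses (A_gt0 : 0 < A) (B_gt0 : 0 < B) (a01 : 0 <= a <= 1).

Lemma plaw_ge0 (t : R) : 0 <= plaw A B a t.
Proof. by rewrite divr_ge0 ?ltW // ltr_wpDl ?powR_ge0. Qed.

Lemma plaw_le (t : R) : plaw A B a t <= A / B.
Proof.
by rewrite ler_pM2l // lef_pV2 ?posrE ?ltr_wpDl ?powR_ge0 // lerDr powR_ge0.
Qed.

Lemma plaw_dist_le_far (x y : R) : 0 < x -> y < x / 2 ->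
  `|plaw A B a x - plaw A B a y| <= 16 * A / (B * x ^+ 4) * (y - x) ^+ 4.
Proof.
move=> x_gt0 y_lt.
have dist_le : `|plaw A B a x - plaw A B a y| <= A / B.
  have := plaw_ge0 x; have := plaw_le x; have := plaw_ge0 y; have := plaw_le y.
  by rewrite ler_distlC; lra.
apply: le_trans dist_le _.
have : (x / 2) ^+ 4 <= (y - x) ^+ 4.
  by rewrite (_ : (y - x) ^+ 4 = (x - y) ^+ 4) ?lerXn2r ?nnegrE; [lra..|ring].
have -> : A / B = 16 * A / (B * x ^+ 4) * (x / 2) ^+ 4 by field; rewrite !gt_eqF.
by apply: ler_wpM2l; rewrite ?divr_ge0 ?mulr_ge0 ?exprn_ge0 ?ltW.
Qed.

Lemma plaw_dist_le_near (x y : R) : 0 < x -> x / 2 <= y ->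
  `|plaw A B a x - plaw A B a y| <= 2 * A * a / (x * x `^ a) * `|y - x|.
Proof.
move=> x_gt0 y_ge.
have y_gt0 : 0 < y by apply: lt_le_trans y_ge; rewrite divr_gt0.
have [u_gt0 v_gt0] := (powR_gt0 a y_gt0, powR_gt0 a x_gt0).
have -> : plaw A B a x - plaw A B a y
    = A * (y `^ a - x `^ a) / ((y `^ a + B) * (x `^ a + B)).
  by rewrite /plaw; field; rewrite !gt_eqF ?ltr_wpDl ?powR_ge0.
have := powR_dist_le a01 x_gt0 y_ge.
set u := y `^ a; set v := x `^ a; set D := `|u - v| => D_le.
have W_gt0 : 0 < (u + B) * (v + B) by rewrite mulr_gt0 ?addr_gt0.
rewrite normrM normfV normrM (gtr0_norm A_gt0) (gtr0_norm W_gt0).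
apply: le_trans (_ : A * D / (u * v) <= _).
  apply: ler_wpM2l; first by rewrite mulr_ge0 // ltW.
  rewrite lef_pV2 ?posrE ?mulr_gt0 ?addr_gt0 //.
  by apply: ler_pM; rewrite ?lerDl ltW.
rewrite ler_pdivrMr ?mulr_gt0 //.
have -> : 2 * A * a / (x * v) * `|y - x| * (u * v) = A * (2 * a * `|y - x| * u) / x.
  by field; rewrite !gt_eqF.
by rewrite ler_pdivlMr // -[A * D * x]mulrA ler_pM2l.
Qed.

Lemma plaw_dist_le (x y : R) : 0 < x ->
  `|plaw A B a x - plaw A B a y|
    <= 16 * A / (B * x ^+ 4) * (y - x) ^+ 4 + 2 * A * a / (x * x `^ a) * `|y - x|.
Proof.
move=> x_gt0; have /andP[a_ge0 _] := a01.
have [A_ge0 B_ge0] := (ltW A_gt0, ltW B_gt0); have x_ge0 := ltW x_gt0.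
have [y_lt | y_ge] := ltP y (x / 2).
  apply: ler_wpDr; last exact: plaw_dist_le_far.
  by rewrite !mulr_ge0 ?invr_ge0 ?mulr_ge0 ?powR_ge0.
apply: ler_wpDl; last exact: plaw_dist_le_near.
by rewrite mulr_ge0 ?exprn_even_ge0 // divr_ge0 ?mulr_ge0 ?exprn_ge0.
Qed.

End PowerLaw.

Lemma natr_binS {R : pzRingType} n m :
  m.+1%:R * 'C(n, m.+1)%:R = (n%:R - m%:R) * 'C(n, m)%:R :> R.
Proof.
have [le_mn | lt_nm] := leqP m n; first by rewrite -natrB // -!natrM mul_bin_left.
by rewrite !bin_small ?mulr0 // ltnW.
Qed.

Section BinomialClosedForms.
Context {R : numFieldType}.
Implicit Type n : nat.

Lemma natr_bin2 n : 'C(n, 2)%:R = n%:R * (n%:R - 1) / 2 :> R.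
Proof.
apply: (@mulfI _ 2); first by rewrite pnatr_eq0.
by rewrite (natr_binS n 1) bin1; field.
Qed.

Lemma natr_bin3 n : 'C(n, 3)%:R = n%:R * (n%:R - 1) * (n%:R - 2) / 6 :> R.
Proof.
apply: (@mulfI _ 3); first by rewrite pnatr_eq0.
by rewrite (natr_binS n 2) natr_bin2; field.
Qed.

Lemma natr_bin4 n :
  'C(n, 4)%:R = n%:R * (n%:R - 1) * (n%:R - 2) * (n%:R - 3) / 24 :> R.
Proof.
apply: (@mulfI _ 4); first by rewrite pnatr_eq0.
by rewrite (natr_binS n 3) natr_bin3; field.
Qed.

End BinomialClosedForms.

Definition binom_mean {R : realType} (N : nat) (p : R) (f : nat -> R) : R :=
  \sum_(n < N.+1) binom_pmf N p n * f n.

Section BinomialMean.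
Context {R : realType} (p : R).
Implicit Types (N : nat) (c : R) (f g : nat -> R).

Lemma binom_meanD N f g :
  binom_mean N p (fun n => f n + g n) = binom_mean N p f + binom_mean N p g.
Proof. by rewrite /binom_mean -big_split; apply: eq_bigr => n _; rewrite mulrDr. Qed.

Lemma binom_meanB N f g :
  binom_mean N p (fun n => f n - g n) = binom_mean N p f - binom_mean N p g.
Proof. by rewrite /binom_mean -sumrB; apply: eq_bigr => n _; rewrite mulrBr. Qed.

Lemma binom_meanZ N c f : binom_mean N p (fun n => c * f n) = c * binom_mean N p f.
Proof. by rewrite /binom_mean mulr_sumr; apply: eq_bigr => n _; rewrite mulrCA. Qed.

Lemma binom_pmfS_binS N i j :
  j.+1%:R * (binom_pmf N.+1 p i.+1 * 'C(i.+1, j.+1)%:R)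
  = N.+1%:R * p * (binom_pmf N p i * 'C(i, j)%:R).
Proof.
have e : (j.+1 * ('C(N.+1, i.+1) * 'C(i.+1, j.+1)) = N.+1 * 'C(N, i) * 'C(i, j))%N.
  by rewrite mulnCA -mul_bin_diag mulnA (mulnC 'C(N.+1, i.+1)) -mul_bin_diag.
have /(congr1 (fun m => m%:R : R)) := e; rewrite !natrM => eR.
rewrite /binom_pmf subSS exprS.
transitivity (j.+1%:R * ('C(N.+1, i.+1)%:R * 'C(i.+1, j.+1)%:R)
                * p * p ^+ i * (1 - p) ^+ (N - i)); first by ring.
by rewrite eR; ring.
Qed.

Lemma binom_mean_bin j N : binom_mean N p (fun n => 'C(n, j)%:R) = 'C(N, j)%:R * p ^+ j.
Proof.
elim: j N => [|j IH] N.
  rewrite bin0 expr0 mulr1 /binom_mean.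
  under eq_bigr do rewrite bin0 mulr1.
  rewrite -(expr1n _ N) -{1}(subrK p 1) exprDn.
  by apply: eq_bigr => n _; rewrite /binom_pmf -mulr_natl; ring.
case: N => [|N].
  by rewrite /binom_mean big_ord_recl big_ord0 !bin0n mulr0 mul0r addr0.
apply: (@mulfI _ j.+1%:R); first by rewrite pnatr_eq0.
rewrite /binom_mean big_ord_recl bin0n mulr0 add0r mulr_sumr.
under eq_bigr do rewrite binom_pmfS_binS.
rewrite -mulr_sumr -/(binom_mean N p (fun i => 'C(i, j)%:R)) IH.
have e : N.+1%:R * 'C(N, j)%:R = j.+1%:R * 'C(N.+1, j.+1)%:R :> R.
  by rewrite -!natrM mul_bin_diag.
rewrite exprS; transitivity (N.+1%:R * 'C(N, j)%:R * (p * p ^+ j)); first by ring.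
by rewrite e; ring.
Qed.

Lemma binom_mean_cst N c : binom_mean N p (fun=> c) = c.
Proof.
have := binom_mean_bin 0 N; rewrite bin0 expr0 mulr1 mulr1n => mean1.
rewrite -[RHS]mulr1 -mean1 -binom_meanZ.
by apply: eq_bigr => n _; rewrite bin0 mulr1.
Qed.

Lemma binom_mean_bin_comb N k (a : nat -> R) :
  binom_mean N p (fun n => \sum_(j < k) a j * 'C(n, j)%:R)
  = \sum_(j < k) a j * ('C(N, j)%:R * p ^+ j).
Proof.
rewrite /binom_mean; under eq_bigr do rewrite mulr_sumr.
rewrite exchange_big; apply: eq_bigr => j _ /=.
by rewrite -binom_mean_bin -binom_meanZ; apply: eq_bigr => n _; rewrite mulrCA.
Qed.

Lemma binom_central_moment2 N :
  binom_mean N p (fun n => (n%:R - N%:R * p) ^+ 2) = N%:R * p * (1 - p).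
Proof.
set x := N%:R * p; pose a j := nth 0 [:: x ^+ 2; 1 - 2 * x; 2] j.
transitivity (binom_mean N p (fun n => \sum_(j < 3) a j * 'C(n, j)%:R)).
  apply: eq_bigr => n _; congr (_ * _).
  by rewrite !big_ord_recl big_ord0 /a /= bin0 bin1 natr_bin2; field.
by rewrite binom_mean_bin_comb !big_ord_recl big_ord0 /a /= bin0 bin1 natr_bin2 /x; field.
Qed.

Lemma binom_central_moment4 N :
  binom_mean N p (fun n => (n%:R - N%:R * p) ^+ 4)
  = N%:R * p * (1 - p) * (1 + 3 * (N%:R - 2) * p * (1 - p)).
Proof.
set x := N%:R * p.
pose a j := nth 0 [:: x ^+ 4; 1 - 4 * x + 6 * x ^+ 2 - 4 * x ^+ 3;
                      14 - 24 * x + 12 * x ^+ 2; 36 - 24 * x; 24] j.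
transitivity (binom_mean N p (fun n => \sum_(j < 5) a j * 'C(n, j)%:R)).
  apply: eq_bigr => n _; congr (_ * _).
  by rewrite !big_ord_recl big_ord0 /a /= bin0 bin1 natr_bin2 natr_bin3 natr_bin4; field.
rewrite binom_mean_bin_comb !big_ord_recl big_ord0 /a /=.
by rewrite bin0 bin1 natr_bin2 natr_bin3 natr_bin4 /x; field.
Qed.

End BinomialMean.

Section BinomialDeviation.
Context {R : realType} {p : R}.
Hypothesis p01 : 0 <= p <= 1.
Implicit Types (N : nat) (f g : nat -> R).

Lemma binom_pmf_ge0 N n : 0 <= binom_pmf N p n.
Proof. by case/andP: p01 => p_ge0 p_le1; rewrite !mulr_ge0 ?exprn_ge0 ?subr_ge0. Qed.

Lemma binom_mean_le N f g :
  (forall n, f n <= g n) -> binom_mean N p f <= binom_mean N p g.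
Proof.
by move=> fg; apply: ler_sum => n _; apply: ler_wpM2l; [exact: binom_pmf_ge0 | exact: fg].
Qed.

Lemma normr_binom_mean_le N f :
  `|binom_mean N p f| <= binom_mean N p (fun n => `|f n|).
Proof.
apply: le_trans (ler_norm_sum _ _ _) _.
by apply: ler_sum => n _; rewrite normrM ger0_norm ?binom_pmf_ge0.
Qed.

Lemma binom_central_moment4_le N : 1 <= N%:R * p ->
  binom_mean N p (fun n => (n%:R - N%:R * p) ^+ 4) <= 4 * (N%:R * p) ^+ 2.
Proof.
rewrite binom_central_moment4; set x := N%:R * p => x_ge1.
have [p_ge0 p_le1] := andP p01.
have -> : x * (1 - p) * (1 + 3 * (N%:R - 2) * p * (1 - p))
    = x * (1 - p) + 3 * x ^+ 2 * (1 - p) ^+ 2 - 6 * x * p * (1 - p) ^+ 2.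
  by rewrite /x; ring.
have : 0 <= x * p * (1 - p) ^+ 2 by rewrite !mulr_ge0 ?ler0n ?subr_ge0.
have : (1 - p) ^+ 2 <= 1 by rewrite expr_le1 ?subr_ge0 // lerBlDr lerDl.
nra.
Qed.

Lemma binom_mean_abs_dev_le N : 0 < N%:R * p ->
  binom_mean N p (fun n => `|n%:R - N%:R * p|) <= Num.sqrt (N%:R * p).
Proof.
set x := N%:R * p; set s := Num.sqrt x => x_gt0.
have s_gt0 : 0 < s by rewrite sqrtr_gt0.
apply: le_trans (binom_mean_le N _ (fun n => (2 * s)^-1 * (n%:R - x) ^+ 2 + s / 2) _) _.
  by move=> n; rewrite mulrC normr_le_AMGM.
rewrite binom_meanD binom_meanZ binom_central_moment2 binom_mean_cst -/x.
have s_mid : (2 * s)^-1 * x + s / 2 = s.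
  by rewrite -[x](sqr_sqrtr (ltW x_gt0)) -/s; field; rewrite gt_eqF.
rewrite -[X in _ <= X]s_mid lerD2r; apply: ler_wpM2l.
  by rewrite invr_ge0 mulr_ge0 // ltW.
by case/andP: p01 => p_ge0 _; rewrite ger_pMr // lerBlDr lerDl.
Qed.

End BinomialDeviation.

Lemma simplex_entry_le1 {R : realType} {K} {q : 'I_K -> R} (k : 'I_K) :
  simplex q -> 0 <= q k <= 1.
Proof. by case=> q_ge0 q_sum; rewrite q_ge0 -q_sum (bigD1 k) //= lerDl sumr_ge0. Qed.

Lemma plaw_binom_err_le {R : realType} {A B a p : R} {N : nat} :
  0 < A -> 0 < B -> 0 <= a <= 1 -> 0 <= p <= 1 -> 1 <= N%:R * p ->
  `|plaw A B a (N%:R * p) - binom_mean N p (fun n => plaw A B a n%:R)|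
    <= 64 * A / B / (N%:R * p) ^+ 2 + 2 * a * A / (N%:R * p) `^ (a + 2^-1).
Proof.
move=> A_gt0 B_gt0 a01 p01; set x := N%:R * p => x_ge1.
have x_gt0 : 0 < x := lt_le_trans ltr01 x_ge1.
have [a_ge0 _] := andP a01.
have [A_ge0 B_ge0] := (ltW A_gt0, ltW B_gt0); have x_ge0 := ltW x_gt0.
set c := 16 * A / (B * x ^+ 4); set U := 2 * A * a / (x * x `^ a).
have c_ge0 : 0 <= c.
  exact: divr_ge0 (mulr_ge0 (ler0n _ 16) A_ge0) (mulr_ge0 B_ge0 (exprn_ge0 4 x_ge0)).
have U_ge0 : 0 <= U.
  exact: divr_ge0 (mulr_ge0 (mulr_ge0 (ler0n _ 2) A_ge0) a_ge0)
                  (mulr_ge0 x_ge0 (powR_ge0 _ _)).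
rewrite -(binom_mean_cst p N (plaw A B a x)) -binom_meanB.
apply: le_trans (normr_binom_mean_le p01 _ _) _.
pose bound n := c * (n%:R - x) ^+ 4 + U * `|n%:R - x|.
apply: le_trans (binom_mean_le p01 _ _ bound _) _; first by move=> n; exact: plaw_dist_le.
rewrite binom_meanD !binom_meanZ; apply: lerD.
  have -> : 64 * A / B / x ^+ 2 = c * (4 * x ^+ 2).
    by rewrite /c; field; rewrite !gt_eqF.
  by apply: (ler_wpM2l c_ge0); exact: binom_central_moment4_le.
have -> : 2 * a * A / x `^ (a + 2^-1) = U * Num.sqrt x.
  rewrite powRD ?(gt_eqF x_gt0) ?implybT // powR12_sqrt // /U.
  (* only the factor x of U becomes sqrt x ^+ 2 *)
  rewrite -{3}[x](sqr_sqrtr x_ge0).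
  by field; rewrite !gt_eqF ?sqrtr_gt0 ?powR_gt0.
by apply: (ler_wpM2l U_ge0); exact: binom_mean_abs_dev_le.
Qed.

Theorem propositionA2 (R : realType) (A B alpha : R) :
  0 < A -> 0 < B -> 0 < alpha -> alpha <= 1 ->
  exists M : R,
    forall (K : nat) (q : 'I_K -> R) (k : 'I_K) (N : nat),
      simplex q -> (1 <= N)%N -> M <= N%:R * q k ->
      `| approx_err A B alpha N (q k) - expected_err A B alpha N (q k) |
        <= 320 * A / B / (N%:R * q k) ^+ 2
           + alpha * A / (N%:R * q k) `^ (alpha + 4^-1)
           + alpha * A / (N%:R * q k) `^ (alpha + 2^-1).
Proof.
move=> A_gt0 B_gt0 a_gt0 a_le1; exists 1 => K q k N q_simplex _ x_ge1.
have a01 : 0 <= alpha <= 1 by rewrite ltW.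
have := plaw_binom_err_le A_gt0 B_gt0 a01 (simplex_entry_le1 k q_simplex) x_ge1.
rewrite /approx_err (mulrC (q k)); set x := N%:R * q k in x_ge1 * => err_le.
have x_gt0 : 0 < x := lt_le_trans ltr01 x_ge1.
apply: (le_trans err_le); rewrite -addrA lerD //.
  by rewrite !ler_pM2r ?invr_gt0 ?exprn_gt0 // ler_nat.
have pow_le : x `^ (alpha + 4^-1) <= x `^ (alpha + 2^-1).
  by rewrite ler_powR // lerD2l lef_pV2 ?posrE // ler_nat.
have : alpha * A / x `^ (alpha + 2^-1) <= alpha * A / x `^ (alpha + 4^-1).
  by rewrite ler_pM2l ?mulr_gt0 // lef_pV2 ?posrE ?powR_gt0.
lra.
Qed.
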